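(* Let $R$ be a supertropical semiring, $V$ a free $R$-module with base $(\varepsilon_i\mid i\in I)$, and $q:V\to R$ a quasilinear quadratic form (i.e. $q(x+y)=q(x)+q(y)$ for all $x,y\in V$). If $x\in V\setminus\{0\}$ is $q$-minimal, then $|\operatorname{supp}(x)|=1$ if $q(x)\in\mathcal T$, and $|\operatorname{supp}(x)|\le2$ if $q(x)\in\mathcal G$.
   Context: All semirings are commutative with $1$. A semiring $R$ is supertropical if $e:=1+1$ satisfies $e+e=e$ and, for all $x,y\in R$: if $ex\neq ey$ then $x+y\in\{x,y\}$, and if $ex=ey$ then $x+y=ey$. $\mathcal T=R\setminus eR$, $\mathcal G=eR\setminus\{0\}$. A quadratic form on an $R$-module $V$ is a map $q:V\to R$ with $q(ax)=a^2q(x)$ such that some symmetric bilinear $b$ satisfies $q(x+y)=q(x)+q(y)+b(x,y)$. Every $R$-module carries the minimal ordering $x\le y\iff\exists z:\ x+z=y$; $x<y$ means $x\le y$, $x\neq y$. A vector $x$ is $q$-minimal if there is no $x'<x$ with $q(x')=q(x)$. For $x=\sum_i x_i\varepsilon_i$, $\operatorname{supp}(x)=\{i: x_i\neq0\}$. *)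

From HB Require Import structures.
From mathcomp Require Import all_boot all_order all_algebra.
From Stdlib Require Import List.
Set Implicit Arguments. Unset Strict Implicit. Unset Printing Implicit Defensive.
Import GRing.Theory.
Local Open Scope ring_scope.

Section Defs.
Variable R : comPzSemiRingType.

Definition ee : R := 1 + 1.

Definition supertropical : Prop :=
  ee + ee = ee /\
  (forall x y : R, ee * x <> ee * y -> x + y = x \/ x + y = y) /\
  (forall x y : R, ee * x = ee * y -> x + y = ee * y).

Definition tangible (a : R) : Prop := ~ (exists r : R, a = ee * r).
Definition ghost_nz (a : R) : Prop := a <> 0 /\ exists r : R, a = ee * r.

(* The free R-module with base (eps_i | i in I) is modelled as the finitely
   supported functions I -> R (eps_i = indicator of i), with pointwise
   addition and scalar multiplication. *)
Variable I : Type.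

Definition finsupp (x : I -> R) : Prop :=
  exists s : list I, forall i, x i <> 0 -> List.In i s.

Definition vadd (x y : I -> R) : I -> R := fun i => x i + y i.
Definition vscale (a : R) (x : I -> R) : I -> R := fun i => a * x i.
Definition veq (x y : I -> R) : Prop := forall i, x i = y i.

Definition quadratic_form (q : (I -> R) -> R) : Prop :=
  (forall a x, finsupp x -> q (vscale a x) = a ^+ 2 * q x) /\
  exists b : (I -> R) -> (I -> R) -> R,
    (forall x y, finsupp x -> finsupp y -> b x y = b y x) /\
    (forall x y z, finsupp x -> finsupp y -> finsupp z ->
        b (vadd x y) z = b x z + b y z) /\
    (forall a x z, finsupp x -> finsupp z -> b (vscale a x) z = a * b x z) /\
    (forall x y, finsupp x -> finsupp y -> q (vadd x y) = q x + q y + b x y).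

Definition quasilinear (q : (I -> R) -> R) : Prop :=
  forall x y, finsupp x -> finsupp y -> q (vadd x y) = q x + q y.

Definition vle (x y : I -> R) : Prop :=
  exists z, finsupp z /\ veq (vadd x z) y.
Definition vlt (x y : I -> R) : Prop := vle x y /\ ~ veq x y.

Definition q_minimal (q : (I -> R) -> R) (x : I -> R) : Prop :=
  ~ (exists x', finsupp x' /\ vlt x' x /\ q x' = q x).

End Defs.

From HB Require Import structures.
From mathcomp Require Import all_boot all_order all_algebra.
From Stdlib Require Import List.
From Stdlib Require Import Classical ClassicalEpsilon FunctionalExtensionality.
Set Implicit Arguments. Unset Strict Implicit. Unset Printing Implicit Defensive.
Local Open Scope ring_scope.
Import GRing.Theory.

(* By quasilinearity, q x is the sum of the values q (x_i e_i) over the support of x.  In a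
   supertropical semiring a + (b + c) always equals a sum of at most two of a, b, c, and a
   tangible a + b equals a or b; hence q x is already the sum over at most two indices (one
   if q x is tangible).  Projecting x onto these indices gives x' <= x with q x' = q x, so
   q-minimality forces x' = x. *)

Section SupertropicalSums.
Variables (R : comPzSemiRingType) (I : Type).
Hypothesis R_st : supertropical R.

Lemma ee_mul_ee : ee R * ee R = ee R.
Proof. by case: R_st => eeD _; rewrite {2}/ee mulrDr mulr1 eeD. Qed.

Lemma supertropical_add3 (a b c : R) :
  [\/ a + (b + c) = a, a + (b + c) = a + b, a + (b + c) = a + c
    | a + (b + c) = b + c].
Proof.
case: R_st => _ [addNghost addghost].
have [bc_ghost | bc_not_ghost] := classic (ee R * b = ee R * c); last first.
  by case: (addNghost _ _ bc_not_ghost) => ->; [apply: Or42 | apply: Or43].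
have bcE : b + c = ee R * c by apply: addghost.
have [abc_ghost | abc_not_ghost] := classic (ee R * a = ee R * (b + c)).
  by apply: Or44; rewrite (addghost _ _ abc_ghost) bcE mulrA ee_mul_ee.
by case: (addNghost _ _ abc_not_ghost) => ->; [apply: Or41 | apply: Or44].
Qed.

Lemma supertropical_add_tangible (a b : R) :
  tangible (a + b) -> a + b = a \/ a + b = b.
Proof.
case: R_st => _ [addNghost addghost] ab_tangible.
have [ab_ghost | ab_not_ghost] := classic (ee R * a = ee R * b); last first.
  exact: addNghost.
by case: ab_tangible; exists b; apply: addghost.
Qed.

Lemma big_supertropical_three (f : I -> R) (a b c : I) :
  NoDup [:: a; b; c] ->
  exists t : list I, [/\ NoDup t, incl t [:: a; b; c], (size t <= 2)%N &
                        \sum_(j <- [:: a; b; c]) f j = \sum_(j <- t) f j].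
Proof.
move=> /NoDup_cons_iff [/= a_notin /NoDup_cons_iff [/= b_notin _]].
rewrite !big_cons big_nil addr0.
case: (supertropical_add3 (f a) (f b) (f c)) => ->;
  [exists [:: a] | exists [:: a; b] | exists [:: a; c] | exists [:: b; c]];
  rewrite ?big_cons ?big_nil ?addr0; split=> //;
  by [repeat constructor => /=; tauto | move=> j /=; tauto].
Qed.

Lemma big_supertropical_sub2 (f : I -> R) (s : list I) : NoDup s ->
  exists t : list I, [/\ NoDup t, incl t s, (size t <= 2)%N &
                        \sum_(j <- s) f j = \sum_(j <- t) f j].
Proof.
elim=> [|a {}s a_notin_s _ [t [t_uniq t_sub t_size sumE]]].
  by exists [::]; split; [constructor | apply: incl_refl | |].
have at_uniq : NoDup (a :: t) by constructor => // /t_sub.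
have at_sub : incl (a :: t) (a :: s) by apply: incl_cons; [left | apply: incl_tl].
have atE : \sum_(j <- a :: s) f j = \sum_(j <- a :: t) f j by rewrite !big_cons sumE.
case: t t_size at_uniq at_sub atE {t_uniq t_sub sumE} => [|b [|c [|//]]] _.
- by move=> *; exists [:: a]; split.
- by move=> *; exists [:: a; b]; split.
move=> abc_uniq abc_sub ->.
have [u [u_uniq u_sub u_size ->]] := big_supertropical_three f abc_uniq.
by exists u; split => //; apply: incl_tran abc_sub.
Qed.

Lemma big_supertropical_tangible (f : I -> R) (s : list I) : NoDup s ->
  tangible (\sum_(j <- s) f j) -> exists a, \sum_(j <- s) f j = f a.
Proof.
move=> /(big_supertropical_sub2 f) [t [_ _ t_size ->]].
case: t t_size => [|a [|b [|//]]] _; rewrite ?big_cons ?big_nil ?addr0.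
- by case; exists 0; rewrite mulr0.
- by exists a.
- by case/supertropical_add_tangible => ->; [exists a | exists b].
Qed.

End SupertropicalSums.

Section Restriction.
Variables (R : comPzSemiRingType) (I : Type).

Definition vrestrict (P : I -> Prop) (x : I -> R) : I -> R :=
  fun j => if excluded_middle_informative (P j) then x j else 0.

Definition vproj (s : list I) (x : I -> R) : I -> R := vrestrict (fun j => In j s) x.

Lemma vrestrict_in (P : I -> Prop) (x : I -> R) j : P j -> vrestrict P x j = x j.
Proof. by rewrite /vrestrict; case: excluded_middle_informative. Qed.

Lemma vrestrict_out (P : I -> Prop) (x : I -> R) j : ~ P j -> vrestrict P x j = 0.
Proof. by rewrite /vrestrict; case: excluded_middle_informative. Qed.

Lemma finsupp_vproj (s : list I) (x : I -> R) : finsupp (vproj s x).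
Proof.
exists s => j; have [// | j_notin] := classic (In j s).
by rewrite /vproj vrestrict_out.
Qed.

Lemma finsupp_vrestrict (P : I -> Prop) (x : I -> R) :
  finsupp x -> finsupp (vrestrict P x).
Proof.
case=> s xs; exists s => j; have [Pj | nPj] := classic (P j).
  by rewrite vrestrict_in //; apply: xs.
by rewrite vrestrict_out.
Qed.

Lemma vrestrict_addC (P : I -> Prop) (x : I -> R) :
  veq (vadd (vrestrict P x) (vrestrict (fun j => ~ P j) x)) x.
Proof.
move=> j; rewrite /vadd; have [Pj | nPj] := classic (P j).
  by rewrite vrestrict_in // vrestrict_out ?addr0.
by rewrite vrestrict_out // vrestrict_in ?add0r.
Qed.

Lemma vproj_nil (x : I -> R) : vproj [::] x = fun _ => 0.
Proof. by apply: functional_extensionality => j; rewrite /vproj vrestrict_out. Qed.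

Lemma vproj_cons (a : I) (s : list I) (x : I -> R) : ~ In a s ->
  vproj (a :: s) x = vadd (vproj [:: a] x) (vproj s x).
Proof.
move=> a_notin_s; apply: functional_extensionality => j; rewrite /vadd /vproj.
have [<- | neq_aj] := classic (a = j).
  rewrite vrestrict_in; last by left.
  by rewrite vrestrict_in ?vrestrict_out ?addr0 //; left.
rewrite [X in _ = X + _]vrestrict_out /= ?add0r; last tauto.
have [js | j_notin] := classic (In j s).
  by rewrite !vrestrict_in //=; right.
by rewrite !vrestrict_out //=; tauto.
Qed.

Lemma vproj_id (s : list I) (x : I -> R) :
  (forall j, x j <> 0 -> In j s) -> vproj s x = x.
Proof.
move=> xs; apply: functional_extensionality => j; rewrite /vproj.
have [js | j_notin] := classic (In j s); first by rewrite vrestrict_in.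
rewrite vrestrict_out //; apply: NNPP => xj.
by apply/j_notin/xs => xj0; apply: xj; rewrite xj0.
Qed.

End Restriction.

Section QuasilinearForms.
Variables (R : comPzSemiRingType) (I : Type) (q : (I -> R) -> R).

Lemma quadratic_form_q0 : quadratic_form q -> q (fun _ => 0) = 0.
Proof.
case=> qZ _; have fs0 : finsupp (fun _ : I => 0 : R) by exists [::].
have -> : (fun _ => 0) = vscale 0 (fun _ : I => 0 : R).
  by apply: functional_extensionality => j; rewrite /vscale mul0r.
by rewrite qZ // expr2 !mul0r.
Qed.

Hypotheses (q_quad : quadratic_form q) (q_ql : quasilinear q).

Lemma quasilinear_big (x : I -> R) (s : list I) : NoDup s ->
  q (vproj s x) = \sum_(j <- s) q (vproj [:: j] x).
Proof.
elim=> [|a {}s a_notin_s _ IH]; first by rewrite vproj_nil big_nil quadratic_form_q0.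
by rewrite vproj_cons // q_ql ?big_cons ?IH //; apply: finsupp_vproj.
Qed.

Lemma q_minimal_support (x : I -> R) (s : list I) :
  finsupp x -> q_minimal q x -> q (vproj s x) = q x ->
  forall j, x j <> 0 -> In j s.
Proof.
move=> x_fs x_min qE.
have restrict_eq : veq (vproj s x) x.
  apply: NNPP => neq; apply: x_min; exists (vproj s x).
  split; first exact: finsupp_vproj.
  split=> //; split=> //; exists (vrestrict (fun j => ~ In j s) x).
  by split; [apply: finsupp_vrestrict | apply: vrestrict_addC].
move=> j xj; apply: NNPP => j_notin; apply: xj.
by rewrite -restrict_eq /vproj vrestrict_out.
Qed.

End QuasilinearForms.

Theorem corollary6p5 (R : comPzSemiRingType) (I : Type) (q : (I -> R) -> R) :
  supertropical R ->
  quadratic_form q -> quasilinear q ->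
  forall x : I -> R, finsupp x -> ~ veq x (fun _ => 0) ->
  q_minimal q x ->
  (tangible (q x) -> exists i : I, forall j : I, x j <> 0 <-> j = i) /\
  (ghost_nz (q x) ->
     exists i1 i2 : I, forall j : I, x j <> 0 -> j = i1 \/ j = i2).
Proof.
move=> R_st q_quad q_ql x x_fs x_nz x_min.
have [i0 xi0] : exists i, x i <> 0 by apply: not_all_ex_not.
have [s0 x_s0] := x_fs.
pose s := nodup (fun a b : I => excluded_middle_informative (a = b)) s0.
have s_uniq : NoDup s := NoDup_nodup _ s0.
have qxE : q x = \sum_(j <- s) q (vproj [:: j] x).
  by rewrite -quasilinear_big // vproj_id // => j /x_s0; apply: (proj2 (nodup_In _ _ _)).
have support t : NoDup t -> q x = \sum_(j <- t) q (vproj [:: j] x) ->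
    forall j, x j <> 0 -> In j t.
  by move=> t_uniq qtE; apply: (q_minimal_support x_fs x_min); rewrite quasilinear_big.
split=> [qx_tangible | _].
- rewrite qxE in qx_tangible.
  have [a qaE] := big_supertropical_tangible R_st s_uniq qx_tangible.
  have a_uniq : NoDup [:: a] by repeat constructor.
  have qxaE : q x = \sum_(j <- [:: a]) q (vproj [:: j] x) by rewrite big_seq1 -qaE.
  have x_a j : x j <> 0 -> j = a by move/(support _ a_uniq qxaE) => [<-|[]].
  by exists a => j; split=> [/x_a // | ->]; rewrite -(x_a _ xi0).
- have [t [t_uniq _ t_size sE]] := big_supertropical_sub2 R_st
    (fun j => q (vproj [:: j] x)) s_uniq.
  have x_t := support t t_uniq (etrans qxE sE).
  have i0_t := x_t _ xi0.
  case: t {t_uniq sE} t_size x_t i0_t => [|a [|b [|//]]] _ x_t; first by [].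
  + by exists a, a => j /x_t [<-|[]]; left.
  + by exists a, b => j /x_t [<-|[<-|[]]]; [left | right].
Qed.
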